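(* Let $p$ and $m$ be positive integers. The binomial coefficients $\binom{\lambda p+1}{2}$ are divisible by $m$ for all non-negative integers $\lambda$ if and only if either $m$ is odd and $m\mid p$, or $m$ is even and $2m\mid p$. *)

From mathcomp Require Import all_boot.

From mathcomp Require Import all_boot zify.

Set Implicit Arguments.
Unset Strict Implicit.
Unset Printing Implicit Defensive.

(* As n(n+1) = 2 C(n+1, 2), the condition reads [2m | n(n+1)] for
   [n = lambda p].  The cases [lambda = 1, 2] give [m | p], because
   [2p = 4 p(p+1) - 2p(2p+1)].  For odd [m] this suffices, as [2] divides every
   pronic number; for even [m] and [p = k m], the factor [k m + 1] is odd, so
   [2m | (km+1) k m] forces [k] even. *)

Lemma dvdn2_pronic (n : nat) : 2 %| n.+1 * n.
Proof. by rewrite dvdn2 oddM /= andNb. Qed.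

Lemma dvdn_bin2 (m n : nat) : (m %| 'C(n.+1, 2)) = (2 * m %| n.+1 * n).
Proof.
rewrite bin2 /= -divn2.
case/dvdnP: (dvdn2_pronic n) => q ->.
by rewrite mulnK // [q * 2]mulnC dvdn_pmul2l.
Qed.

Lemma odd_dvdn_pronic (m n : nat) :
  odd m -> (2 * m %| n.+1 * n) = (m %| n.+1 * n).
Proof. by move=> om; rewrite Gauss_dvd ?coprime2n // dvdn2_pronic. Qed.

Lemma dvdn_pronic_double (d p : nat) :
  d %| p.+1 * p -> d %| (p.*2).+1 * p.*2 -> d %| p.*2.
Proof.
move=> d1 d2.
have -> : p.*2 = 4 * (p.+1 * p) - (p.*2).+1 * p.*2 by lia.
by rewrite dvdn_sub // dvdn_mull.
Qed.

Lemma even_dvdn_pronic (m p : nat) : 0 < m -> ~~ odd m -> m %| p ->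
  (2 * m %| p.+1 * p) = (2 * m %| p).
Proof.
move=> m_gt0 em /dvdnP[k ->].
rewrite mulnA !dvdn_pmul2r // !dvdn2 oddM oddS oddM.
by rewrite (negbTE em) andbF.
Qed.

Theorem proposition13 (p m : nat) (hp : 0 < p) (hm : 0 < m) :
  (forall lambda : nat, m %| 'C(lambda * p + 1, 2)) <->
  ((odd m && (m %| p)) || (~~ odd m && (2 * m %| p))).
Proof.
have pronicE lambda :
    m %| 'C(lambda * p + 1, 2) = (2 * m %| (lambda * p).+1 * (lambda * p)).
  by rewrite addn1 dvdn_bin2.
split=> [mC | ].
- have m1 := mC 1; rewrite pronicE mul1n in m1.
  have m2 := mC 2; rewrite pronicE [2 * p]mul2n in m2.
  have mp : m %| p.
    by rewrite -(dvdn_pmul2l (isT : 0 < 2)) [2 * p]mul2n (dvdn_pronic_double m1 m2).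
  case: (boolP (odd m)) => om /=; first by rewrite mp.
  by rewrite -(even_dvdn_pronic hm om mp).
- case/orP=> /andP[om mp] lambda; rewrite pronicE.
  + by rewrite odd_dvdn_pronic // !dvdn_mull.
  + by rewrite !dvdn_mull.
Qed.
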